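(* Let $T$ be a Cartesian tree with $n$ nodes whose left subtree $A$ has $k-1$ nodes and whose right subtree $B$ has $n-k$ nodes. Then $|ng(T)|=|ng(A)|+|ng(B)|+|ng(T,k-1)|+|ng(T,k)|$.
   Context: Sequences are finite sequences of pairwise distinct integers indexed from $1$. The Cartesian tree $C(x)$ of a sequence $x$ of length $n$ is empty if $n=0$; otherwise, if $x[i]$ is the minimum of $x$, it is the binary tree with root $i$ (nodes labelled by positions), left subtree $C(x[1\ldots i-1])$ and right subtree $C(x[i+1\ldots n])$; Cartesian trees with $n$ nodes are exactly the binary trees with $n$ nodes. For $1\le i\le n-1$, $\tau(x,i)$ is obtained from $x$ by exchanging $x[i]$ and $x[i+1]$. For a Cartesian tree $T$ with $n$ nodes and $1\le i\le n-1$, $ng(T,i)=\{C(\tau(x,i)) : x \text{ a sequence with } C(x)=T\}$, with $ng(T,i)=\emptyset$ for $i\notin\{1,\ldots,n-1\}$, and $ng(T)=\bigcup_{i=1}^{n-1}ng(T,i)$ (so $ng$ of the empty tree or of a single node is empty). *)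

From Stdlib Require Import List ZArith Lia.
Import ListNotations.
Open Scope Z_scope.

(* Unlabelled binary trees.  A Cartesian tree's node labels are positions,
   which are exactly the in-order ranks of the nodes, so the shape determines
   the labelled tree. *)
Inductive bt : Type := Leaf | Node (l r : bt).

Fixpoint tsize (t : bt) : nat :=
  match t with Leaf => 0%nat | Node l r => S (tsize l + tsize r) end.

Fixpoint min_idx_aux (x : list Z) (i bi : nat) (bv : Z) : nat :=
  match x with
  | [] => bi
  | y :: ys => if y <? bv then min_idx_aux ys (S i) i y
               else min_idx_aux ys (S i) bi bv
  end.

Definition min_idx (x : list Z) : nat :=
  match x with [] => 0%nat | y :: ys => min_idx_aux ys 1 0 y end.

(* Cartesian tree with fuel; the fuel length x always suffices. *)
Fixpoint cart_aux (fuel : nat) (x : list Z) : bt :=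
  match fuel with
  | O => Leaf
  | S f =>
    match x with
    | [] => Leaf
    | _ => let i := min_idx x in
           Node (cart_aux f (firstn i x)) (cart_aux f (skipn (S i) x))
    end
  end.

Definition cart (x : list Z) : bt := cart_aux (length x) x.

(* tau(x,i): exchange x[i] and x[i+1] (1-indexed positions, 1 <= i <= n-1). *)
Definition tau (x : list Z) (i : nat) : list Z :=
  firstn (i - 1) x ++ [nth i x 0; nth (i - 1) x 0] ++ skipn (S i) x.

(* t \in ng(T,i); empty unless 1 <= i <= n-1 with n the number of nodes of T.
   Sequences are finite lists of pairwise distinct integers. *)
Definition ngi (T : bt) (i : nat) (t : bt) : Prop :=
  (1 <= i <= tsize T - 1)%nat /\
  exists x : list Z, NoDup x /\ cart x = T /\ cart (tau x i) = t.

Definition ng (T : bt) (t : bt) : Prop :=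
  exists i : nat, (1 <= i <= tsize T - 1)%nat /\ ngi T i t.

Definition card_of (P : bt -> Prop) (m : nat) : Prop :=
  exists s : list bt, NoDup s /\ length s = m /\ forall t, P t <-> In t s.

From Stdlib Require Import List ZArith Lia Permutation Classical.
Import ListNotations.
Open Scope Z_scope.

(* C(a ++ m :: b) = Node (C a) (C b) when m is smaller than every entry of a and b.
   Hence a swap at position i < k-1 only involves entries of the left part and acts
   on the tree as the same swap inside A; symmetrically i > k acts inside B.  The
   swaps at k-1 and k move the minimum one step, giving trees whose left subtree
   has k-2, resp. k, nodes, while the first two kinds keep k-1; trees of the form
   Node A' B and Node A B' coincide only if A' = A, and no tree is its own
   neighbour.  So ng(T) is the disjoint union of {Node A' B}, {Node A B'}, ng(T,k-1)
   and ng(T,k).  Conversely every swap in A or B lifts to T, because sequences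
   realizing A and B can be shifted apart and glued around a new minimum.  All
   these sets are finite since neighbours have as many nodes as the tree. *)

Lemma min_idx_aux_Forall_gt d : forall i bi bv,
  Forall (Z.lt bv) d -> min_idx_aux d i bi bv = bi.
Proof.
  induction d as [|y d IH]; intros i bi bv H; simpl; [reflexivity|].
  inversion_clear H as [|? ? Hy Hd].
  replace (y <? bv) with false by (symmetry; apply Z.ltb_ge; lia).
  auto.
Qed.

Lemma min_idx_aux_app_min c : forall m d i bi bv, m < bv ->
  Forall (Z.lt m) c -> Forall (Z.lt m) d ->
  min_idx_aux (c ++ m :: d) i bi bv = (i + length c)%nat.
Proof.
  induction c as [|y c IH]; intros m d i bi bv Hbv Hc Hd; simpl.
  - replace (m <? bv) with true by (symmetry; apply Z.ltb_lt; lia).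
    rewrite min_idx_aux_Forall_gt; [lia | exact Hd].
  - inversion_clear Hc as [|? ? Hy Hc'].
    destruct (y <? bv); rewrite IH; auto; lia.
Qed.

Lemma min_idx_app_min a m b :
  Forall (Z.lt m) (a ++ b) -> min_idx (a ++ m :: b) = length a.
Proof.
  rewrite Forall_app; intros [Ha Hb].
  destruct a as [|y a]; simpl.
  - apply min_idx_aux_Forall_gt, Hb.
  - inversion_clear Ha. rewrite min_idx_aux_app_min; auto.
Qed.

Lemma min_idx_aux_lt d : forall i bi bv,
  (bi < i)%nat -> (min_idx_aux d i bi bv < i + length d)%nat.
Proof.
  induction d as [|y d IH]; intros i bi bv H; simpl; [lia|].
  destruct (y <? bv); eapply Nat.lt_le_trans; try apply IH; lia.
Qed.

Lemma min_idx_lt x : x <> [] -> (min_idx x < length x)%nat.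
Proof.
  destruct x as [|y x]; intros H; [congruence|].
  pose proof (min_idx_aux_lt x 1 0 y). simpl. lia.
Qed.

Lemma cart_aux_cons f x : x <> [] -> cart_aux (S f) x =
  Node (cart_aux f (firstn (min_idx x) x)) (cart_aux f (skipn (S (min_idx x)) x)).
Proof. destruct x; [congruence | reflexivity]. Qed.

Lemma cart_aux_fuel_irrelevant f1 : forall f2 x,
  (length x <= f1)%nat -> (length x <= f2)%nat -> cart_aux f1 x = cart_aux f2 x.
Proof.
  induction f1 as [|f1 IH]; intros f2 x H1 H2.
  - destruct x; simpl in H1; [destruct f2; reflexivity | lia].
  - destruct x as [|y x']; [destruct f2; reflexivity|].
    destruct f2 as [|f2]; [simpl in H2; lia|].
    assert (Hne : y :: x' <> []) by discriminate.
    pose proof (min_idx_lt _ Hne).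
    rewrite !cart_aux_cons by exact Hne.
    f_equal; apply IH; rewrite ?length_firstn, ?length_skipn; lia.
Qed.

Lemma cart_aux_enough_fuel f x : (length x <= f)%nat -> cart_aux f x = cart x.
Proof. intros; apply cart_aux_fuel_irrelevant; lia. Qed.

Lemma tsize_cart_aux f : forall x, (length x <= f)%nat -> tsize (cart_aux f x) = length x.
Proof.
  induction f as [|f IH]; intros x H.
  - destruct x; simpl in *; [reflexivity | lia].
  - destruct x as [|y x']; [reflexivity|].
    assert (Hne : y :: x' <> []) by discriminate.
    pose proof (min_idx_lt _ Hne).
    rewrite cart_aux_cons by exact Hne. cbn [tsize].
    rewrite !IH; rewrite ?length_firstn, ?length_skipn; lia.
Qed.

Lemma tsize_cart x : tsize (cart x) = length x.
Proof. apply tsize_cart_aux; lia. Qed.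

Lemma cart_app_min a m b :
  Forall (Z.lt m) (a ++ b) -> cart (a ++ m :: b) = Node (cart a) (cart b).
Proof.
  intros H. unfold cart at 1. rewrite length_app. simpl length.
  rewrite Nat.add_succ_r, cart_aux_cons by (destruct a; discriminate).
  rewrite min_idx_app_min by exact H.
  rewrite firstn_app, firstn_all, Nat.sub_diag, firstn_O, app_nil_r.
  rewrite skipn_app, skipn_all2, Nat.sub_succ_l, Nat.sub_diag by lia; simpl.
  f_equal; apply cart_aux_enough_fuel; lia.
Qed.

Lemma min_idx_aux_shift c d : forall i bi bv,
  min_idx_aux (map (Z.add c) d) i bi (c + bv) = min_idx_aux d i bi bv.
Proof.
  induction d as [|y d IH]; intros i bi bv; simpl; [reflexivity|].
  replace (c + y <? c + bv) with (y <? bv)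
    by (destruct (Z.ltb_spec y bv), (Z.ltb_spec (c + y) (c + bv)); lia).
  destruct (y <? bv); apply IH.
Qed.

Lemma min_idx_shift c x : min_idx (map (Z.add c) x) = min_idx x.
Proof. destruct x; [reflexivity | apply min_idx_aux_shift]. Qed.

Lemma cart_aux_shift c f : forall x, cart_aux f (map (Z.add c) x) = cart_aux f x.
Proof.
  induction f as [|f IH]; intros x; [reflexivity|].
  destruct x as [|y x]; [reflexivity|].
  rewrite !cart_aux_cons by discriminate.
  rewrite min_idx_shift, firstn_map, skipn_map, !IH. reflexivity.
Qed.

Lemma cart_shift c x : cart (map (Z.add c) x) = cart x.
Proof. unfold cart; rewrite length_map; apply cart_aux_shift. Qed.

Lemma split_at_min x : NoDup x -> x <> [] ->
  exists a m b, x = a ++ m :: b /\ Forall (Z.lt m) (a ++ b).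
Proof.
  induction x as [|y x IH]; intros Hnd Hne; [congruence|].
  inversion_clear Hnd as [|? ? Hy Hnd'].
  destruct x as [|y' x'].
  - exists [], y, []. auto.
  - destruct (IH Hnd' ltac:(discriminate)) as (a & m & b & E & Hm).
    destruct (Z.lt_ge_cases y m) as [Hlt|Hge].
    + exists [], y, (y' :: x'). split; [reflexivity|]. simpl.
      rewrite E, Forall_app in *. destruct Hm as [Ha Hb].
      split; [|constructor; [lia|]]; eapply Forall_impl; try eassumption; intros; lia.
    + assert (y <> m) by (intros ->; apply Hy; rewrite E; apply in_elt).
      exists (y :: a), m, b. split; [rewrite E; reflexivity|].
      constructor; [lia | exact Hm].
Qed.

Lemma list_abs_bound (l : list Z) : exists r, 0 <= r /\ Forall (fun z => Z.abs z <= r) l.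
Proof.
  induction l as [|y l (r & Hr & H)]; [exists 0; split; [lia | constructor]|].
  exists (Z.max r (Z.abs y)). split; [lia|]. constructor; [lia|].
  eapply Forall_impl; [|exact H]. cbv beta. intros; lia.
Qed.

Lemma node_realization x y : NoDup x -> NoDup y -> exists c1 c2 m : Z,
  forall x' y', Permutation x x' -> Permutation y y' ->
  NoDup (map (Z.add c1) x' ++ m :: map (Z.add c2) y') /\
  cart (map (Z.add c1) x' ++ m :: map (Z.add c2) y') = Node (cart x') (cart y').
Proof.
  intros Hx Hy.
  destruct (list_abs_bound (x ++ y)) as (r & Hr & Hxy).
  exists (r + 1), (3 * r + 2), 0. intros x' y' Px Py.
  apply Forall_app in Hxy as [Bx By].
  apply (Permutation_Forall Px) in Bx. apply (Permutation_Forall Py) in By.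
  assert (Lx : Forall (fun z => 0 < z <= 2 * r + 1) (map (Z.add (r + 1)) x')).
  { apply Forall_map. eapply Forall_impl; [|exact Bx]. cbv beta. intros; lia. }
  assert (Ly : Forall (fun z => 2 * r + 1 < z) (map (Z.add (3 * r + 2)) y')).
  { apply Forall_map. eapply Forall_impl; [|exact By]. cbv beta. intros; lia. }
  assert (Hmin : Forall (Z.lt 0) (map (Z.add (r + 1)) x' ++ map (Z.add (3 * r + 2)) y')).
  { apply Forall_app; split; eapply Forall_impl; try eassumption; cbv beta; intros; lia. }
  split; [|rewrite cart_app_min, !cart_shift by exact Hmin; reflexivity].
  rewrite Forall_forall in Lx, Ly.
  apply NoDup_app; [|constructor|].
  - apply FinFun.Injective_map_NoDup; [intros ? ? ?; lia | exact (Permutation_NoDup Px Hx)].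
  - intros Hin. specialize (Ly 0 Hin). lia.
  - apply FinFun.Injective_map_NoDup; [intros ? ? ?; lia | exact (Permutation_NoDup Py Hy)].
  - intros z Hz [<- | Hz'];
      [specialize (Lx 0 Hz) | specialize (Lx z Hz); specialize (Ly z Hz')]; lia.
Qed.

Lemma cart_surjective T : exists x, NoDup x /\ cart x = T.
Proof.
  induction T as [|A (x & Hx & HA) B (y & Hy & HB)].
  { exists []. split; [constructor | reflexivity]. }
  destruct (node_realization x y Hx Hy) as (c1 & c2 & m & H).
  destruct (H x y) as [Hnd Hc]; try apply Permutation_refl.
  eexists; split; [exact Hnd|]. rewrite Hc; congruence.
Qed.

Lemma tau_app p u v q : tau (p ++ u :: v :: q) (S (length p)) = p ++ v :: u :: q.
Proof.
  induction p as [|y p IH]; [reflexivity|].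
  unfold tau in *. simpl in *. rewrite Nat.sub_0_r in IH. f_equal. exact IH.
Qed.

Lemma split_adjacent j (x : list Z) : (S j < length x)%nat ->
  exists p u v q, x = p ++ u :: v :: q /\ length p = j.
Proof.
  revert x; induction j as [|j IH]; intros x H.
  - destruct x as [|u [|v q]]; simpl in H; try lia. exists [], u, v, q. auto.
  - destruct x as [|y x]; simpl in H; [lia|].
    destruct (IH x ltac:(lia)) as (p & u & v & q & -> & <-).
    exists (y :: p), u, v, q. auto.
Qed.

Lemma ngi_iff_swap T i t : ngi T i t <-> (1 <= i <= tsize T - 1)%nat /\
  exists p u v q, NoDup (p ++ u :: v :: q) /\ S (length p) = i /\
    cart (p ++ u :: v :: q) = T /\ cart (p ++ v :: u :: q) = t.
Proof.
  split.
  - intros (Hi & x & Hnd & <- & <-). split; [exact Hi|].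
    rewrite tsize_cart in Hi. destruct i as [|j]; [lia|].
    destruct (split_adjacent j x ltac:(lia)) as (p & u & v & q & -> & <-).
    exists p, u, v, q. rewrite tau_app. auto.
  - intros (Hi & p & u & v & q & Hnd & <- & Hx & Ht). split; [exact Hi|].
    exists (p ++ u :: v :: q). rewrite tau_app. auto.
Qed.

Lemma ngi_tsize T i t : ngi T i t -> tsize t = tsize T.
Proof.
  intros (_ & p & u & v & q & _ & _ & <- & <-)%ngi_iff_swap.
  rewrite !tsize_cart, !length_app. reflexivity.
Qed.

Lemma ng_tsize T t : ng T t -> tsize t = tsize T.
Proof. intros (i & _ & H). exact (ngi_tsize _ _ _ H). Qed.

Lemma ng_of_ngi T i t : ngi T i t -> ng T t.
Proof. intros H. exists i. split; [apply H | exact H]. Qed.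

Lemma cart_eq_node x A B : NoDup x -> cart x = Node A B ->
  exists a m b, x = a ++ m :: b /\ Forall (Z.lt m) (a ++ b) /\ cart a = A /\ cart b = B.
Proof.
  intros Hnd Hx. destruct (split_at_min x Hnd) as (a & m & b & -> & Hm).
  - intros ->. discriminate.
  - rewrite cart_app_min in Hx by exact Hm. injection Hx as HA HB.
    exists a, m, b. auto.
Qed.

Lemma app_eq_app_le {X : Type} (l1 r1 l2 r2 : list X) :
  l1 ++ r1 = l2 ++ r2 -> (length l1 <= length l2)%nat ->
  exists w, l2 = l1 ++ w /\ r1 = w ++ r2.
Proof.
  revert l2; induction l1 as [|y l1 IH]; intros l2 E Hl; [exists l2; auto|].
  destruct l2 as [|y' l2]; simpl in Hl; [lia|].
  injection E as <- E. destruct (IH l2 E ltac:(lia)) as (w & -> & ->).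
  exists w. auto.
Qed.

Lemma Forall_adjacent_swap (P : Z -> Prop) p u v q :
  Forall P (p ++ u :: v :: q) -> Forall P (p ++ v :: u :: q).
Proof. apply Permutation_Forall, Permutation_app_head, perm_swap. Qed.

Lemma map_adjacent_app_l (f : Z -> Z) p u v q r :
  map f (p ++ u :: v :: q) ++ r = map f p ++ f u :: f v :: map f q ++ r.
Proof. rewrite map_app, <- app_assoc. reflexivity. Qed.

Lemma map_adjacent_app_r (f : Z -> Z) l m p u v q :
  l ++ m :: map f (p ++ u :: v :: q) = (l ++ m :: map f p) ++ f u :: f v :: map f q.
Proof. rewrite map_app, app_comm_cons, app_assoc. reflexivity. Qed.

Lemma app_adjacent_assoc (p q r : list Z) u v :
  (p ++ u :: v :: q) ++ r = p ++ u :: v :: q ++ r.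
Proof. rewrite <- app_assoc. reflexivity. Qed.

Lemma ngi_node_left_inv A B i t : (i < tsize A)%nat ->
  ngi (Node A B) i t -> exists A', ngi A i A' /\ t = Node A' B.
Proof.
  intros Hi (_ & p & u & v & q & Hnd & Hp & Hx & Ht)%ngi_iff_swap.
  destruct (cart_eq_node _ _ _ Hnd Hx) as (a & m & b & E & Hm & <- & <-).
  rewrite tsize_cart in Hi.
  destruct (app_eq_app_le p (u :: v :: q) a (m :: b) E ltac:(lia)) as (w & -> & Ew).
  rewrite length_app in Hi.
  destruct w as [|u' [|v' q']]; simpl in Hi; try lia.
  injection Ew as <- <- ->.
  rewrite <- app_adjacent_assoc in Hnd, Ht. rewrite app_adjacent_assoc in Hm.
  exists (cart (p ++ v :: u :: q')). split.
  - apply ngi_iff_swap. split; [rewrite tsize_cart, length_app; simpl; lia|].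
    exists p, u, v, q'. repeat split; auto. exact (NoDup_app_remove_r _ _ Hnd).
  - rewrite <- Ht, cart_app_min; [reflexivity|].
    rewrite app_adjacent_assoc. exact (Forall_adjacent_swap _ _ _ _ _ Hm).
Qed.

Lemma ngi_node_left_intro A B i A' : ngi A i A' -> ngi (Node A B) i (Node A' B).
Proof.
  intros (Hi & p & u & v & q & Hnd & Hp & HA & HA')%ngi_iff_swap.
  destruct (cart_surjective B) as (y & Hy & <-).
  destruct (node_realization _ _ Hnd Hy) as (c1 & c2 & m & H).
  destruct (H (p ++ u :: v :: q) y) as [Hnd' Hx]; try apply Permutation_refl.
  destruct (H (p ++ v :: u :: q) y) as [_ Ht];
    [apply Permutation_app_head, perm_swap | apply Permutation_refl|].
  rewrite map_adjacent_app_l in Hnd', Hx, Ht.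
  apply ngi_iff_swap. split; [simpl; lia|].
  exists (map (Z.add c1) p), (c1 + u), (c1 + v), (map (Z.add c1) q ++ m :: map (Z.add c2) y).
  rewrite length_map, Hx, Ht, HA, HA'. auto.
Qed.

Lemma ngi_node_right_inv A B i t : (S (tsize A) < i)%nat ->
  ngi (Node A B) i t -> exists B', ngi B (i - S (tsize A)) B' /\ t = Node A B'.
Proof.
  intros Hi (Hr & p & u & v & q & Hnd & Hp & Hx & Ht)%ngi_iff_swap.
  destruct (cart_eq_node _ _ _ Hnd Hx) as (a & m & b & E & Hm & <- & <-).
  rewrite tsize_cart in Hi |- *. rewrite <- Hx, tsize_cart in Hr.
  destruct (app_eq_app_le (a ++ [m]) b p (u :: v :: q)) as (w & -> & ->).
  { rewrite <- app_assoc, E. reflexivity. }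
  { rewrite length_app. simpl. lia. }
  rewrite !length_app in Hp, Hr. simpl in Hp, Hr.
  rewrite <- !app_assoc in Hnd, Ht. simpl in Hnd, Ht.
  exists (cart (w ++ v :: u :: q)). split.
  - apply ngi_iff_swap. split; [rewrite tsize_cart, !length_app; simpl; lia|].
    exists w, u, v, q. repeat split; [| lia].
    apply (NoDup_app_remove_l a), NoDup_cons_iff in Hnd. apply Hnd.
  - rewrite <- Ht, cart_app_min; [reflexivity|].
    apply Forall_app in Hm as [Ha Hb]. apply Forall_app. split; [exact Ha|].
    exact (Forall_adjacent_swap _ _ _ _ _ Hb).
Qed.

Lemma ngi_node_right_intro A B j B' :
  ngi B j B' -> ngi (Node A B) (S (tsize A) + j) (Node A B').
Proof.
  intros (Hj & p & u & v & q & Hnd & Hp & HB & HB')%ngi_iff_swap.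
  destruct (cart_surjective A) as (x & Hx & <-).
  destruct (node_realization _ _ Hx Hnd) as (c1 & c2 & m & H).
  destruct (H x (p ++ u :: v :: q)) as [Hnd' Hc]; try apply Permutation_refl.
  destruct (H x (p ++ v :: u :: q)) as [_ Ht];
    [apply Permutation_refl | apply Permutation_app_head, perm_swap|].
  rewrite map_adjacent_app_r in Hnd', Hc, Ht.
  apply ngi_iff_swap. split; [simpl; rewrite tsize_cart in *; lia|].
  exists (map (Z.add c1) x ++ m :: map (Z.add c2) p), (c2 + u), (c2 + v), (map (Z.add c2) q).
  rewrite Hc, Ht, HB, HB', length_app, length_map, tsize_cart. simpl.
  rewrite length_map. repeat split; [exact Hnd' | lia].
Qed.

Definition left_tsize (t : bt) : nat :=
  match t with Leaf => 0%nat | Node l _ => tsize l end.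

Lemma ngi_node_root_left A B t :
  ngi (Node A B) (tsize A) t -> S (left_tsize t) = tsize A.
Proof.
  intros (_ & p & u & v & q & Hnd & Hp & Hx & Ht)%ngi_iff_swap.
  destruct (cart_eq_node _ _ _ Hnd Hx) as (a & m & b & E & Hm & <- & _).
  rewrite tsize_cart in Hp |- *.
  destruct (app_eq_app_le p (u :: v :: q) a (m :: b) E ltac:(lia)) as (w & -> & Ew).
  rewrite length_app in Hp.
  destruct w as [|u' [|v' w']]; simpl in Hp; try lia.
  injection Ew as <- -> ->.
  rewrite <- app_assoc in Hm.
  rewrite <- Ht, cart_app_min by exact Hm. simpl. rewrite tsize_cart, length_app. simpl. lia.
Qed.

Lemma ngi_node_root_right A B t :
  ngi (Node A B) (S (tsize A)) t -> left_tsize t = S (tsize A).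
Proof.
  intros (_ & p & u & v & q & Hnd & Hp & Hx & Ht)%ngi_iff_swap.
  destruct (cart_eq_node _ _ _ Hnd Hx) as (a & m & b & E & Hm & <- & _).
  rewrite tsize_cart in Hp |- *.
  destruct (app_eq_app_le p (u :: v :: q) a (m :: b) E ltac:(lia)) as (w & -> & Ew).
  rewrite length_app in Hp.
  destruct w as [|u' w']; simpl in Hp; try lia.
  injection Ew as -> <-. rewrite app_nil_r in Hm |- *.
  replace (p ++ v :: m :: q) with ((p ++ [v]) ++ m :: q) in Ht
    by (rewrite <- app_assoc; reflexivity).
  rewrite <- Ht, cart_app_min.
  - simpl. rewrite tsize_cart, length_app. simpl. lia.
  - rewrite <- app_assoc. exact Hm.
Qed.

Lemma ng_node_iff A B t : ng (Node A B) t <->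
  (exists A', ng A A' /\ t = Node A' B) \/ (exists B', ng B B' /\ t = Node A B') \/
  ngi (Node A B) (tsize A) t \/ ngi (Node A B) (S (tsize A)) t.
Proof.
  split.
  - intros (i & _ & H).
    destruct (Nat.lt_total i (tsize A)) as [Hi | [-> | Hi]]; [| tauto |].
    + left. destruct (ngi_node_left_inv _ _ _ _ Hi H) as (A' & HA & ->).
      exists A'. split; [exact (ng_of_ngi _ _ _ HA) | reflexivity].
    + destruct (Nat.lt_total (S (tsize A)) i) as [Hi' | [<- | Hi']]; [| tauto | lia].
      right; left. destruct (ngi_node_right_inv _ _ _ _ Hi' H) as (B' & HB & ->).
      exists B'. split; [exact (ng_of_ngi _ _ _ HB) | reflexivity].
  - intros [(A' & (i & _ & HA) & ->) | [(B' & (j & _ & HB) & ->) | [H | H]]];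
      eapply ng_of_ngi.
    + exact (ngi_node_left_intro _ B _ _ HA).
    + exact (ngi_node_right_intro A _ _ _ HB).
    + exact H.
    + exact H.
Qed.

Lemma ng_irrefl T : ~ ng T T.
Proof.
  induction T as [|A IHA B IHB].
  - intros (i & Hi & _). simpl in Hi. lia.
  - intros [(A' & HA & [= ->]) | [(B' & HB & [= ->]) | [H | H]]]%ng_node_iff.
    + exact (IHA HA).
    + exact (IHB HB).
    + apply ngi_node_root_left in H. simpl in H. lia.
    + apply ngi_node_root_right in H. simpl in H. lia.
Qed.

Lemma trees_tsize_le_listed n : exists L, forall t, (tsize t <= n)%nat -> In t L.
Proof.
  induction n as [|n (L & HL)].
  - exists [Leaf]. intros [|l r] H; simpl in *; [auto | lia].
  - exists (Leaf :: flat_map (fun l => map (Node l) L) L).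
    intros [|l r] H; simpl in *; [auto|right].
    apply in_flat_map. exists l. split; [apply HL; lia | apply in_map, HL; lia].
Qed.

Lemma card_of_exists_listed (P : bt -> Prop) L :
  (forall t, P t -> In t L) -> exists m, card_of P m.
Proof.
  intros HL.
  assert (Hs : exists s, NoDup s /\ forall t, In t s <-> P t /\ In t L).
  { clear HL. induction L as [|y L (s & Hs & Hi)].
    { exists []. split; [constructor | simpl; tauto]. }
    destruct (classic (P y /\ ~ In y s)) as [[Py Hy] | Hy].
    - exists (y :: s). split; [constructor; assumption|].
      intros t. simpl. rewrite Hi. split; [intros [<- | ?]; tauto | tauto].
    - exists s. split; [exact Hs|]. intros t. simpl. rewrite Hi.
      split; [tauto|]. intros [Pt [<- | It]]; [|tauto].
      apply NNPP. intros Ht. apply Hy. split; [exact Pt|]. rewrite Hi. tauto. }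
  destruct Hs as (s & Hs & Hi). exists (length s), s. repeat split; [exact Hs| |]; firstorder.
Qed.

Lemma card_of_exists_tsize (P : bt -> Prop) n :
  (forall t, P t -> tsize t = n) -> exists m, card_of P m.
Proof.
  intros H. destruct (trees_tsize_le_listed n) as (L & HL).
  apply (card_of_exists_listed P L). intros t Pt. apply HL. rewrite (H t Pt). lia.
Qed.

Lemma card_of_ext (P Q : bt -> Prop) m :
  (forall t, P t <-> Q t) -> card_of P m -> card_of Q m.
Proof. intros H (s & Hs & Hl & Hi). exists s. repeat split; auto; firstorder. Qed.

Lemma card_of_union (P Q : bt -> Prop) a b :
  card_of P a -> card_of Q b -> (forall t, P t -> Q t -> False) ->
  card_of (fun t => P t \/ Q t) (a + b).
Proof.
  intros (s1 & N1 & <- & I1) (s2 & N2 & <- & I2) D. exists (s1 ++ s2). split; [|split].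
  - apply NoDup_app; [exact N1 | exact N2|].
    intros t H1 H2. apply I1 in H1. apply I2 in H2. eauto.
  - apply length_app.
  - intros t. rewrite in_app_iff, I1, I2. tauto.
Qed.

Lemma card_of_image (P : bt -> Prop) (f : bt -> bt) a :
  (forall x y, f x = f y -> x = y) -> card_of P a ->
  card_of (fun t => exists u, P u /\ t = f u) a.
Proof.
  intros Hf (s & N & <- & I). exists (map f s). repeat split.
  - exact (FinFun.Injective_map_NoDup Hf N).
  - apply length_map.
  - intros (u & Pu & ->). apply in_map, I, Pu.
  - intros (u & <- & Iu)%in_map_iff. exists u. split; [apply I, Iu | reflexivity].
Qed.

Lemma card_of_ng_node A B a b c d :
  card_of (ng A) a -> card_of (ng B) b ->
  card_of (ngi (Node A B) (tsize A)) c -> card_of (ngi (Node A B) (S (tsize A))) d ->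
  card_of (ng (Node A B)) (a + b + c + d).
Proof.
  intros Ca Cb Cc Cd.
  set (inside_subtree t :=
    (exists A', ng A A' /\ t = Node A' B) \/ (exists B', ng B B' /\ t = Node A B')).
  assert (Hinside : forall t, inside_subtree t -> left_tsize t = tsize A).
  { intros t [(A' & HA & ->) | (B' & _ & ->)]; [exact (ng_tsize _ _ HA) | reflexivity]. }
  apply (card_of_ext (fun t => (inside_subtree t \/ ngi (Node A B) (tsize A) t) \/
                               ngi (Node A B) (S (tsize A)) t)).
  { intros t. rewrite ng_node_iff. unfold inside_subtree. tauto. }
  apply card_of_union; [apply card_of_union; [apply card_of_union | exact Cc |] | exact Cd |].
  - apply card_of_image; [congruence | exact Ca].
  - apply card_of_image; [congruence | exact Cb].
  - intros t (A' & HA & ->) (B' & _ & [= -> _]). exact (ng_irrefl _ HA).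
  - intros t Hi Hr%ngi_node_root_left. apply Hinside in Hi. lia.
  - intros t Hl Hr%ngi_node_root_right.
    destruct Hl as [Hi%Hinside | Hl%ngi_node_root_left]; lia.
Qed.

Theorem lemma7 (n k : nat) (T A B : bt) :
  T = Node A B -> tsize T = n -> tsize A = (k - 1)%nat -> tsize B = (n - k)%nat ->
  exists a b c d : nat,
    card_of (ng A) a /\ card_of (ng B) b /\
    card_of (ngi T (k - 1)) c /\ card_of (ngi T k) d /\
    card_of (ng T) (a + b + c + d).
Proof.
  intros -> Hn HA HB. simpl in Hn.
  replace k with (S (tsize A)) by lia. rewrite Nat.sub_succ, Nat.sub_0_r.
  destruct (card_of_exists_tsize (ng A) _ (ng_tsize A)) as (a & Ca).
  destruct (card_of_exists_tsize (ng B) _ (ng_tsize B)) as (b & Cb).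
  destruct (card_of_exists_tsize _ _ (ngi_tsize (Node A B) (tsize A))) as (c & Cc).
  destruct (card_of_exists_tsize _ _ (ngi_tsize (Node A B) (S (tsize A)))) as (d & Cd).
  exists a, b, c, d. repeat split; auto using card_of_ng_node.
Qed.
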